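(* A policy profile $\pi^*\in\Pi$ is a Nash policy if and only if $\langle v(\pi^* ),\pi-\pi^*\rangle\le0$ for all $\pi\in\Pi$.
   Context: Standing setting. Finite $N$-player stochastic game with random stopping: players $\mathcal N$, finite states $\mathcal S$, finite action sets $\mathcal A_i$, $\mathcal A=\prod_i\mathcal A_i$, rewards $r_i:\mathcal S\times\mathcal A\to[-1,1]$, nonnegative transition weights $P(s'\mid s,a)$ with stopping probability $\zeta_{s,a}=1-\sum_{s'}P(s'\mid s,a)\ge\zeta>0$, initial distribution $\rho$. Policies $\pi_i\in\Pi_i=\Delta(\mathcal A_i)^{\mathcal S}$, $\Pi=\prod_i\Pi_i$. Episodes: $s_0\sim\rho$; players independently draw $a_{i,t}\sim\pi_i(\cdot\mid s_t)$; stop w.p. $\zeta_{s_t,a_t}$ (time $T(\tau)$), else move to $s'$ w.p. $P(s'\mid s_t,a_t)$. $V_{i,\rho}(\pi)=\mathbb E_\pi[\sum_{t=0}^{T(\tau)}r_i(s_t,a_t)]$, $v_i(\pi)=\nabla_{\pi_i}V_{i,\rho}(\pi)$, $v=(v_i)_i$. A Nash policy satisfies $V_{i,\rho}(\pi^* )\ge V_{i,\rho}(\pi_i;\pi^*_{-i})$ for all $i$ and $\pi_i\in\Pi_i$. Standing assumption: the mismatch coefficient $M=\max_{\pi,\pi'}\|\tilde d^\pi_\rho/\tilde d^{\pi'}_\rho\|_\infty$ is finite, where $\tilde d^\pi_\rho(s)=\mathbb E_\pi[\sum_{t=0}^{T(\tau)}\mathbf 1\{s_t=s\}]$. *)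

From HB Require Import structures.
From mathcomp Require Import all_boot all_order all_algebra.
From mathcomp Require Import all_classical all_reals all_analysis.
Set Implicit Arguments. Unset Strict Implicit. Unset Printing Implicit Defensive.
Import Order.TTheory GRing.Theory Num.Theory numFieldNormedType.Exports.
Local Open Scope ring_scope.

Section Game.
Variables (R : realType) (N S : finType) (A : N -> finType).

Definition jact := {dffun forall i : N, A i}.

(* (not necessarily stochastic) policy arrays: pi i s a_i = pi_i(a_i | s) *)
Definition polarr := forall i : N, S -> A i -> R.

Definition is_policy_i (i : N) (x : S -> A i -> R) : Prop :=
  forall s, (forall a, 0 <= x s a) /\ \sum_(a : A i) x s a = 1.

Definition is_policy (pi : polarr) : Prop := forall i, is_policy_i (pi i).

Definition jprob (pi : polarr) (s : S) (a : jact) : R := \prod_(i : N) pi i s (a i).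

Variables (P : S -> jact -> S -> R) (rho : S -> R).
(* P s a s' = P(s' | s, a); the stopping probability is 1 - sum_s' P s a s' *)

(* occ pi t s = Pr_pi(T(tau) >= t and s_t = s) : the episode is still running at
   time t and is in state s *)
Fixpoint occ (pi : polarr) (t : nat) : S -> R :=
  match t with
  | 0 => rho
  | t'.+1 => fun s' => \sum_(s : S) \sum_(a : jact) occ pi t' s * jprob pi s a * P s a s'
  end.

Definition value (rr : S -> jact -> R) (pi : polarr) : R :=
  limn (series (fun t => \sum_(s : S) \sum_(a : jact) occ pi t s * jprob pi s a * rr s a)).

Definition visit (pi : polarr) (s : S) : R := limn (series (fun t => occ pi t s)).

Definition upd (pi : polarr) (i : N) (x : S -> A i -> R) : polarr :=
  @dfwith N (fun j => S -> A j -> R) pi i x.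

(* v_i(pi) = grad_{pi_i} V_{i,rho}(pi): partial derivative w.r.t. the coordinate
   pi_i(b | s) (direct parameterization, V extended to arbitrary real arrays) *)
Definition grad (r : N -> S -> jact -> R) (pi : polarr) (i : N) (s : S) (b : A i) : R :=
  derive1 (fun h : R => value (r i)
    (upd pi (fun s' a' => pi i s' a' + (if (s' == s) && (a' == b) then h else 0)))) 0.

Definition grad_inner (r : N -> S -> jact -> R) (pi0 pi : polarr) : R :=
  \sum_(i : N) \sum_(s : S) \sum_(b : A i) grad r pi0 s b * (pi i s b - pi0 i s b).

Definition is_nash (r : N -> S -> jact -> R) (pis : polarr) : Prop :=
  forall i (x : S -> A i -> R), is_policy_i x ->
    value (r i) (upd pis x) <= value (r i) pis.

End Game.

From HB Require Import structures.
From mathcomp Require Import all_boot all_order all_algebra.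
From mathcomp Require Import all_classical all_reals all_analysis.
From mathcomp Require Import ring lra.
Import Order.TTheory GRing.Theory Num.Theory numFieldNormedType.Exports.
Local Open Scope classical_set_scope.
Local Open Scope ring_scope.

Set Implicit Arguments. Unset Strict Implicit.

(* For a unilateral deviation [x] of player [i], the performance difference lemma gives
     V_i(x; pi_-i) - V_i(pi) = sum_s d^(x; pi_-i)(s) sum_b (x - pi_i)(s, b) Q_i(s, b),
   where Q_i(s, b) is the action value of [i] against pi_-i.  Perturbing the single entry
   pi_i(b | s) by h multiplies the occupation of s by 1 / (1 - h alpha) for a constant alpha,
   so the partial derivative is v_i(pi)(s, b) = d^pi(s) Q_i(s, b).  Hence both the Nash
   property and the first-order condition are equivalent to: on every state visited under pi,
   no action has a larger Q_i than the pi_i-average.  The two weightings d^(x; pi_-i) and d^pi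
   have the same support because the mismatch coefficient is finite. *)

Section SeriesFacts.
Variable R : realType.

Lemma cvgn_series_geometric_bound (u : R ^nat) (C q : R) : 0 <= q < 1 ->
  (forall t, `|u t| <= C * q ^+ t) -> cvgn (series u).
Proof.
move=> /andP[q0 q1] hu; apply: normed_cvg.
apply: (@series_le_cvg R _ (geometric C q)) => //.
- by move=> n; exact: normr_ge0.
- by move=> n /=; apply: le_trans (normr_ge0 (u n)) (hu n).
- by apply: is_cvg_geometric_series; rewrite ger0_norm.
Qed.

Lemma cvg_series_lincomb (J : finType) (c : J -> R) (g : J -> R ^nat) (L : J -> R) :
  (forall j, series (g j) @ \oo --> L j) ->
  series (fun t => \sum_j c j * g j t) @ \oo --> \sum_j c j * L j.
Proof.
move=> hg.
have -> : series (fun t => \sum_j c j * g j t) = (fun n => \sum_j c j * series (g j) n).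
  apply: funext => n; rewrite /series /= exchange_big /=.
  by apply: eq_bigr => j _; rewrite big_distrr.
apply: cvg_big => [|j _]; first exact: add_continuous.
exact: cvgMl_tmp.
Qed.

Lemma cvg_series_shift (u : R ^nat) (L : R) :
  series (fun t => u t.+1) @ \oo --> L -> series u @ \oo --> u 0%N + L.
Proof.
move=> h; rewrite -cvg_shiftS.
have -> : [sequence series u n.+1]_n = (fun n => u 0%N + series (fun t => u t.+1) n).
  by apply: funext => n; rewrite /series /= big_nat_recl.
by apply: cvgD => //; exact: cvg_cst.
Qed.

Lemma derive1_slope (f g : R -> R) (delta : R) : 0 < delta ->
  (forall h, h != 0 -> `|h| < delta -> f h - f 0 = h * g h) ->
  g @ 0 --> g 0 -> derive1 f 0 = g 0.
Proof.
move=> d0 hf hg; rewrite /derive1; apply: cvg_lim => //.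
have e : {near (0:R)^', g =1 (fun h => h^-1 *: (f (h + 0) - f 0))}.
  near=> h.
  have hn : h != 0 by near: h; exact: nbhs_dnbhs_neq.
  have hs : `|h| < delta by near: h; exact: dnbhs0_lt.
  by rewrite addr0 (hf h hn hs) /= scalerA mulVf // scale1r.
apply: cvg_trans (near_eq_cvg e) _.
exact: cvg_trans (cvg_app g (@nbhs_dnbhs _ (0:R))) hg.
Unshelve. all: by end_near.
Qed.

End SeriesFacts.

Section SubstochasticKernel.
Variables (R : realType) (S : finType) (K : S -> S -> R) (q : R).
Hypothesis q_ge0_lt1 : 0 <= q < 1.
Hypothesis K_row_le : forall s, \sum_s' `|K s s'| <= q.

Fixpoint kpow (mu : S -> R) (t : nat) : S -> R :=
  match t with
  | 0 => mu
  | t'.+1 => fun s' => \sum_s kpow mu t' s * K s s'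
  end.

Definition occup (mu : S -> R) (s : S) : R := limn (series (fun t => kpow mu t s)).

Definition delta_at (s : S) : S -> R := fun s' => (s' == s)%:R.

(* [reward_to_go f = sum_t K^t f], written through the occupation measures of point masses. *)
Definition reward_to_go (f : S -> R) (s : S) : R := \sum_s' occup (delta_at s) s' * f s'.

Lemma sum_delta_at_mull (f : S -> R) s : \sum_s' delta_at s s' * f s' = f s.
Proof.
rewrite (bigD1 s) //= /delta_at eqxx mul1r big1 ?addr0 // => s' /negbTE ->.
by rewrite mul0r.
Qed.

Lemma sum_delta_at_mulr (f : S -> R) s : \sum_s' f s' * delta_at s s' = f s.
Proof. by under eq_bigr do rewrite mulrC; exact: sum_delta_at_mull. Qed.

Lemma kpow_norm_le mu t : \sum_s `|kpow mu t s| <= q ^+ t * \sum_s `|mu s|.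
Proof.
elim: t => [|t IH] /=; first by rewrite expr0 mul1r.
apply: (le_trans (y := \sum_s' \sum_s `|kpow mu t s| * `|K s s'|)).
  apply: ler_sum => s' _; apply: le_trans (ler_norm_sum _ _ _) _.
  by apply: ler_sum => s _; rewrite normrM.
rewrite exchange_big /=.
apply: (le_trans (y := \sum_s `|kpow mu t s| * q)).
  by apply: ler_sum => s _; rewrite -big_distrr /=; exact: ler_wpM2l.
rewrite -big_distrl /= exprSr -mulrA [q * _]mulrC mulrA.
by case/andP: q_ge0_lt1 => q0 _; exact: ler_wpM2r.
Qed.

Lemma cvg_occup mu s : series (fun t => kpow mu t s) @ \oo --> occup mu s.
Proof.
apply/cvg_ex; exists (occup mu s); apply: cvgP.
apply: (@cvgn_series_geometric_bound _ _ (\sum_s `|mu s|) _ q_ge0_lt1) => t.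
rewrite mulrC; apply: le_trans (kpow_norm_le mu t).
by rewrite (bigD1 s) //= lerDl sumr_ge0.
Qed.

Lemma cvg_occup_weighted mu (f : S -> R) :
  series (fun t => \sum_s kpow mu t s * f s) @ \oo --> \sum_s occup mu s * f s.
Proof.
under eq_fun do under eq_bigr do rewrite mulrC.
have -> : \sum_s occup mu s * f s = \sum_s f s * occup mu s.
  by apply: eq_bigr => s _; rewrite mulrC.
by apply: cvg_series_lincomb => s; exact: cvg_occup.
Qed.

Lemma occup_fix mu s' : occup mu s' = mu s' + \sum_s occup mu s * K s s'.
Proof.
have h := @cvg_series_shift _ (fun t => kpow mu t s') _ (@cvg_occup_weighted mu (K^~ s')).
exact: (cvg_unique _ (@cvg_occup mu s') h).
Qed.

Lemma kpow_lincomb (J : finType) (a : J -> R) (nu : J -> S -> R) mu :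
  (forall s', mu s' = \sum_j a j * nu j s') ->
  forall t s', kpow mu t s' = \sum_j a j * kpow (nu j) t s'.
Proof.
move=> hmu; elim=> [|t IH] s' /=; first exact: hmu.
under eq_bigr do rewrite IH big_distrl /=.
rewrite exchange_big /=; apply: eq_bigr => j _.
by rewrite big_distrr /=; apply: eq_bigr => s _; rewrite mulrA.
Qed.

Lemma kpowSl mu t s' : kpow mu t.+1 s' = kpow (fun s2 => \sum_s mu s * K s s2) t s'.
Proof.
elim: t s' => [|t IH] s' //=.
by apply: eq_bigr => s _; rewrite -IH.
Qed.

Lemma occup_delta_at_fix s s' :
  occup (delta_at s) s' = delta_at s s' + \sum_s1 K s s1 * occup (delta_at s1) s'.
Proof.
have step t : kpow (delta_at s) t.+1 s' = \sum_s1 K s s1 * kpow (delta_at s1) t s'.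
  rewrite kpowSl; apply: kpow_lincomb => s2.
  rewrite sum_delta_at_mull (bigD1 s2) //= /delta_at eqxx mulr1 big1 ?addr0 // => j.
  by rewrite eq_sym => /negbTE ->; rewrite mulr0.
have h : series (fun t => kpow (delta_at s) t.+1 s') @ \oo -->
    \sum_s1 K s s1 * occup (delta_at s1) s'.
  under eq_fun do rewrite step.
  by apply: cvg_series_lincomb => s1; exact: cvg_occup.
exact: (cvg_unique _ (@cvg_occup (delta_at s) s')
  (@cvg_series_shift _ (fun t => kpow (delta_at s) t s') _ h)).
Qed.

Lemma reward_to_go_fix f s : reward_to_go f s = f s + \sum_s1 K s s1 * reward_to_go f s1.
Proof.
rewrite /reward_to_go; under eq_bigr do rewrite occup_delta_at_fix mulrDl.
rewrite big_split /= sum_delta_at_mull; congr (_ + _).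
under eq_bigr do rewrite big_distrl /=.
rewrite exchange_big /=; apply: eq_bigr => s1 _.
by rewrite big_distrr /=; apply: eq_bigr => s2 _; rewrite mulrA.
Qed.

End SubstochasticKernel.

Arguments delta_at {R S} s s'.

(* Performance difference identity: [d'] is the occupation measure of [K'] from [rho]
   and [w] the value of [c] under [K]. *)
Lemma perf_diff (R : comNzRingType) (S : finType) (rho d' w c c' : S -> R) (K K' : S -> S -> R) :
  (forall s', d' s' = rho s' + \sum_s d' s * K' s s') ->
  (forall s, w s = c s + \sum_s' K s s' * w s') ->
  \sum_s d' s * c' s - \sum_s rho s * w s =
  \sum_s d' s * (c' s - c s + \sum_s' (K' s s' - K s s') * w s').
Proof.
move=> hd hw.
have e1 : \sum_s d' s * (c' s - c s + \sum_s' (K' s s' - K s s') * w s') =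
   \sum_s d' s * c' s - \sum_s d' s * w s + \sum_s d' s * \sum_s' K' s s' * w s'.
  rewrite -sumrB -big_split /=; apply: eq_bigr => s _; rewrite (hw s).
  under eq_bigr do rewrite mulrBl; rewrite sumrB; ring.
have e2 : \sum_s d' s * \sum_s' K' s s' * w s' = \sum_s' (d' s' - rho s') * w s'.
  under eq_bigr do rewrite big_distrr /=.
  rewrite exchange_big /=; apply: eq_bigr => s' _.
  rewrite [d' s' in X in X * _](hd s') addrAC subrr add0r big_distrl /=.
  by apply: eq_bigr => s _; rewrite mulrA.
rewrite e1 e2; under [X in _ = _ + X]eq_bigr do rewrite mulrBl; rewrite sumrB; ring.
Qed.

Lemma bigA_distr_dffun (R : comNzRingType) (I : finType) (T_ : I -> finType)
    (F : forall i, T_ i -> R) :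
  \prod_i \sum_(b : T_ i) F i b = \sum_(a : {dffun forall i, T_ i}) \prod_i F i (a i).
Proof.
rewrite (reindex (@dffun_of_fprod I T_)) /=; last exact/onW_bij/dffun_of_fprod_bij.
transitivity (\sum_(t : fprod T_) \prod_(i in I) [ffun b => F i b] (t i)); last first.
  by apply: eq_bigr => t _; apply: eq_bigr => i _; rewrite /dffun_of_fprod !ffunE.
rewrite big_fprod.
transitivity (\prod_i \sum_(j in tagged_with T_ i) untag 0 [ffun b => F i b] j).
  apply: eq_bigr => i _; rewrite -(big_tag (fun i => [ffun b => F i b])).
  by apply: eq_bigr => b _; rewrite ffunE.
rewrite bigA_distr_big_dep; apply: eq_bigl => g /=.
by apply/familyP/familyP => h j; have := h j.
Qed.

Section Game.
Variables (R : realType) (N S : finType) (A : N -> finType).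
Variables (P : S -> jact A -> S -> R) (rho : S -> R).
Implicit Types (pi : @polarr R N S A).

Definition trans pi s s' := \sum_(a : jact A) jprob pi s a * P s a s'.
Definition stage_reward (rr : S -> jact A -> R) pi s := \sum_(a : jact A) jprob pi s a * rr s a.

Definition jprob_others pi (i : N) s (a : jact A) := \prod_(j | j != i) pi j s (a j).

Lemma occ_kpow pi t s : occ P rho pi t s = kpow (trans pi) rho t s.
Proof.
elim: t s => [|t IH] s' //=.
apply: eq_bigr => s _; rewrite IH /trans big_distrr /=.
by apply: eq_bigr => a _; rewrite mulrA.
Qed.

Lemma visit_occup pi : visit P rho pi =1 occup (trans pi) rho.
Proof. by move=> s; rewrite /visit /occup; under eq_fun do rewrite occ_kpow. Qed.

Lemma value_occup rr pi q : 0 <= q < 1 -> (forall s, \sum_s' `|trans pi s s'| <= q) ->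
  value P rho rr pi = \sum_s occup (trans pi) rho s * stage_reward rr pi s.
Proof.
move=> hq hK; rewrite /value.
have -> : (fun t => \sum_s \sum_a occ P rho pi t s * jprob pi s a * rr s a) =
          (fun t => \sum_s kpow (trans pi) rho t s * stage_reward rr pi s).
  apply: funext => t; apply: eq_bigr => s _; rewrite occ_kpow /stage_reward big_distrr /=.
  by apply: eq_bigr => a _; rewrite mulrA.
by apply: cvg_lim => //; exact: (cvg_occup_weighted hq hK).
Qed.

Lemma jprob_ge0 pi s a : is_policy pi -> 0 <= jprob pi s a.
Proof. by move=> hp; apply: prodr_ge0 => i _; case: (hp i s). Qed.

Lemma sum_jprob pi s : is_policy pi -> \sum_a jprob pi s a = 1.
Proof.
move=> hp; rewrite /jprob -(bigA_distr_dffun (fun i b => pi i s b)).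
by apply: big1 => i _; case: (hp i s).
Qed.

Lemma jprobE pi i s a : jprob pi s a = pi i s (a i) * jprob_others pi i s a.
Proof. by rewrite /jprob (bigD1 i). Qed.

Lemma upd_self pi i (x : S -> A i -> R) : @upd R N S A pi i x i = x.
Proof. exact: dfwith_in. Qed.

Lemma upd_other pi i (x : S -> A i -> R) j : j != i -> @upd R N S A pi i x j = pi j.
Proof. by move=> hj; apply: dfwith_out; rewrite eq_sym. Qed.

Lemma upd_policy pi i (x : S -> A i -> R) :
  is_policy pi -> is_policy_i x -> is_policy (upd pi x).
Proof.
move=> hp hx j; case: (eqVneq j i) => [-> | hj]; first by rewrite upd_self.
by rewrite upd_other.
Qed.

Lemma jprob_upd pi i (x : S -> A i -> R) s a :
  jprob (upd pi x) s a = x s (a i) * jprob_others pi i s a.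
Proof.
rewrite (jprobE _ i) upd_self; congr (_ * _).
by apply: eq_bigr => j hj; rewrite upd_other.
Qed.

Lemma sum_jact_by_action (i : N) (F : A i -> R) (G : jact A -> R) :
  \sum_(a : jact A) F (a i) * G a = \sum_b F b * \sum_(a : jact A | a i == b) G a.
Proof.
rewrite (partition_big (fun a : jact A => a i) predT) //=.
by apply: eq_bigr => b _; rewrite big_distrr; apply: eq_bigr => a /eqP <-.
Qed.

End Game.

Section StoppingGame.
Variables (R : realType) (N S : finType) (A : N -> finType).
Variables (P : S -> jact A -> S -> R) (rho : S -> R) (zeta : R).
Hypotheses (zeta_gt0 : 0 < zeta) (P_ge0 : forall s a s', 0 <= P s a s')
  (stop_ge : forall s a, zeta <= 1 - \sum_s' P s a s').
Implicit Types (pi : @polarr R N S A).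

(* The maximum guards against [1 - zeta < 0], possible when [S] is empty. *)
Definition qstop := Num.max 0 (1 - zeta).

Lemma qstopP : 0 <= qstop < 1.
Proof. by rewrite /qstop le_max lexx /= gt_max ltr01 /= ltrBlDr ltrDl. Qed.

Lemma trans_ge0 pi s s' : is_policy pi -> 0 <= trans P pi s s'.
Proof. by move=> hp; apply: sumr_ge0 => a _; rewrite mulr_ge0 ?jprob_ge0. Qed.

Lemma trans_row_le pi : is_policy pi -> forall s, \sum_s' `|trans P pi s s'| <= 1 - zeta.
Proof.
move=> hp s; under eq_bigr do rewrite ger0_norm ?trans_ge0 //.
rewrite /trans exchange_big /=.
apply: (le_trans (y := \sum_a jprob pi s a * (1 - zeta))).
  apply: ler_sum => a _; rewrite -big_distrr /=; apply: ler_wpM2l; first exact: jprob_ge0.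
  by have := stop_ge s a; lra.
by rewrite -big_distrl /= sum_jprob // mul1r.
Qed.

Lemma trans_row_le_qstop pi : is_policy pi -> forall s, \sum_s' `|trans P pi s s'| <= qstop.
Proof. by move=> hp s; apply: le_trans (trans_row_le hp s) _; rewrite le_max lexx orbT. Qed.

Variables (r : N -> S -> jact A -> R) (pis : @polarr R N S A) (i : N).
Arguments pis : clear implicits.
Hypothesis pis_policy : is_policy pis.

Definition vfun : S -> R := reward_to_go (trans P pis) (stage_reward (r i) pis).

Definition qjoint s a := r i s a + \sum_s' P s a s' * vfun s'.

Definition qfun s (b : A i) := \sum_(a : jact A | a i == b) jprob_others pis i s a * qjoint s a.

Lemma vfun_fix s : vfun s = stage_reward (r i) pis s + \sum_s' trans P pis s s' * vfun s'.
Proof. exact: (reward_to_go_fix qstopP (trans_row_le_qstop pis_policy)). Qed.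

Lemma value_vfun : value P rho (r i) pis = \sum_s rho s * vfun s.
Proof.
rewrite (value_occup _ _ qstopP (trans_row_le_qstop pis_policy)).
apply/eqP; rewrite -subr_eq0; apply/eqP.
rewrite (perf_diff _ (occup_fix qstopP (trans_row_le_qstop pis_policy) rho) vfun_fix).
by apply: big1 => s _; rewrite subrr add0r big1 ?mulr0 // => s' _; rewrite subrr mul0r.
Qed.

Lemma trans_upd_sub (x : S -> A i -> R) s s' :
  trans P (upd pis x) s s' - trans P pis s s' =
  \sum_(a : jact A) (x s (a i) - pis i s (a i)) * (jprob_others pis i s a * P s a s').
Proof.
rewrite /trans -sumrB; apply: eq_bigr => a _.
by rewrite jprob_upd (jprobE _ i); ring.
Qed.

Lemma sum_trans_upd_sub (x : S -> A i -> R) s (w : S -> R) :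
  \sum_s' (trans P (upd pis x) s s' - trans P pis s s') * w s' =
  \sum_b (x s b - pis i s b) *
    \sum_(a : jact A | a i == b) jprob_others pis i s a * \sum_s' P s a s' * w s'.
Proof.
rewrite -(sum_jact_by_action (fun b => x s b - pis i s b)).
under eq_bigr do rewrite trans_upd_sub big_distrl /=.
rewrite exchange_big /=; apply: eq_bigr => a _.
by rewrite big_distrr big_distrr /=; apply: eq_bigr => s' _; ring.
Qed.

Lemma stage_reward_upd_sub (x : S -> A i -> R) s :
  stage_reward (r i) (upd pis x) s - stage_reward (r i) pis s =
  \sum_b (x s b - pis i s b) * \sum_(a : jact A | a i == b) jprob_others pis i s a * r i s a.
Proof.
rewrite -(sum_jact_by_action (fun b => x s b - pis i s b)) /stage_reward -sumrB.
by apply: eq_bigr => a _; rewrite jprob_upd (jprobE _ i); ring.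
Qed.

(* [x] need not be a policy, only a contraction, so that the perturbations in [grad] are covered. *)
Lemma value_upd_sub (x : S -> A i -> R) q : 0 <= q < 1 ->
  (forall s, \sum_s' `|trans P (upd pis x) s s'| <= q) ->
  value P rho (r i) (upd pis x) - value P rho (r i) pis =
  \sum_s occup (trans P (upd pis x)) rho s * \sum_b (x s b - pis i s b) * qfun s b.
Proof.
move=> hq hK.
rewrite (value_occup _ _ hq hK) value_vfun (perf_diff _ (occup_fix hq hK rho) vfun_fix).
apply: eq_bigr => s _; congr (_ * _).
rewrite stage_reward_upd_sub sum_trans_upd_sub -big_split /=; apply: eq_bigr => b _.
rewrite -mulrDr -big_split /=; congr (_ * _); apply: eq_bigr => a _.
by rewrite /qjoint mulrDr.
Qed.

Definition others_mass :=
  \sum_s \sum_s' \sum_(a : jact A) `|jprob_others pis i s a * P s a s'|.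

Lemma others_mass_ge0 : 0 <= others_mass.
Proof. by do 3! (apply: sumr_ge0 => ? _). Qed.

Definition qhalf := Num.max 0 (1 - zeta / 2).

Lemma qhalfP : 0 <= qhalf < 1.
Proof. by rewrite /qhalf le_max lexx /= gt_max ltr01 /= ltrBlDr ltrDl divr_gt0. Qed.

Lemma trans_upd_row_le (x : S -> A i -> R) e : 0 <= e ->
  (forall s b, `|x s b - pis i s b| <= e) -> e * others_mass <= zeta / 2 ->
  forall s, \sum_s' `|trans P (upd pis x) s s'| <= qhalf.
Proof.
move=> e0 hx he s.
apply: (le_trans (y := (1 - zeta) + e * others_mass)); last first.
  by rewrite /qhalf le_max; apply/orP; right; lra.
have -> : \sum_s' `|trans P (upd pis x) s s'| = \sum_s' `|trans P pis s s' +
    (trans P (upd pis x) s s' - trans P pis s s')|.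
  by apply: eq_bigr => s' _; rewrite addrC subrK.
apply: le_trans (ler_sum _ (fun s' _ => ler_normD _ _)) _.
rewrite big_split /=; apply: lerD; first exact: trans_row_le.
apply: (le_trans (y := \sum_s' \sum_(a : jact A) e * `|jprob_others pis i s a * P s a s'|)).
  apply: ler_sum => s' _; rewrite trans_upd_sub; apply: le_trans (ler_norm_sum _ _ _) _.
  by apply: ler_sum => a _; rewrite normrM; apply: ler_wpM2r.
under eq_bigr do rewrite -big_distrr /=; rewrite -big_distrr /=.
apply: ler_wpM2l => //; rewrite /others_mass [X in _ <= X](bigD1 s) //= lerDl.
by do 3! (apply: sumr_ge0 => ? _).
Qed.

Definition bump (s0 : S) (b0 : A i) (h : R) : S -> A i -> R :=
  fun s' a' => pis i s' a' + (if (s' == s0) && (a' == b0) then h else 0).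

Lemma bump_sub s0 b0 h s b :
  bump s0 b0 h s b - pis i s b = if (s == s0) && (b == b0) then h else 0.
Proof. by rewrite /bump addrAC subrr add0r. Qed.

Lemma bump_sub_le s0 b0 h s b : `|bump s0 b0 h s b - pis i s b| <= `|h|.
Proof. by rewrite bump_sub; case: ifP; rewrite ?normr0. Qed.

Lemma sum_bump s0 b0 h (D : S -> R) (G : S -> A i -> R) :
  \sum_s D s * \sum_b (bump s0 b0 h s b - pis i s b) * G s b = D s0 * (h * G s0 b0).
Proof.
rewrite (bigD1 s0) //= [X in _ + X]big1 ?addr0.
  congr (_ * _); rewrite (bigD1 b0) //= bump_sub !eqxx /= big1 ?addr0 // => b hb.
  by rewrite bump_sub eqxx /= (negbTE hb) mul0r.
move=> s hs; rewrite big1 ?mulr0 // => b _.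
by rewrite bump_sub (negbTE hs) mul0r.
Qed.

Section Bump.
Variables (s0 : S) (b0 : A i).

Definition visits0 : S -> R := reward_to_go (trans P pis) (delta_at s0).

Definition bump_rate :=
  \sum_(a : jact A | a i == b0) jprob_others pis i s0 a * \sum_s' P s0 a s' * visits0 s'.

Definition bump_radius :=
  Num.min (zeta / (2 * (others_mass + 1))) (1 / (2 * (`|bump_rate| + 1))).

Definition occup_bump h := occup (trans P (upd pis (bump s0 b0 h))) rho.

Lemma bump_radius_gt0 : 0 < bump_radius.
Proof.
have := others_mass_ge0; have := normr_ge0 bump_rate => hr hm.
by rewrite lt_min !divr_gt0 ?mulr_gt0 //; lra.
Qed.

Lemma bump_row_le h : `|h| <= bump_radius ->
  forall s, \sum_s' `|trans P (upd pis (bump s0 b0 h)) s s'| <= qhalf.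
Proof.
move=> hh; apply: (trans_upd_row_le (e := `|h|)) => //; first exact: bump_sub_le.
have hm := others_mass_ge0.
have : `|h| <= zeta / (2 * (others_mass + 1)) by apply: le_trans hh _; rewrite ge_min lexx.
rewrite ler_pdivlMr ?mulr_gt0 //; last by lra.
by have := normr_ge0 h; nra.
Qed.

Lemma value_bump_sub h : `|h| <= bump_radius ->
  value P rho (r i) (upd pis (bump s0 b0 h)) - value P rho (r i) pis =
  occup_bump h s0 * (h * qfun s0 b0).
Proof. by move=> hh; rewrite (value_upd_sub qhalfP (bump_row_le hh)) sum_bump. Qed.

Lemma value_visits0 : \sum_s rho s * visits0 s = occup (trans P pis) rho s0.
Proof.
have := perf_diff (delta_at s0) (occup_fix qstopP (trans_row_le_qstop pis_policy) rho)
  (reward_to_go_fix qstopP (trans_row_le_qstop pis_policy) (delta_at s0)).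
rewrite [in RHS]big1 => [/eqP|s _]; last first.
  by rewrite subrr add0r big1 ?mulr0 // => s' _; rewrite subrr mul0r.
by rewrite subr_eq0 sum_delta_at_mulr => /eqP <-.
Qed.

Lemma occup_bump_sub h : `|h| <= bump_radius ->
  occup_bump h s0 - occup (trans P pis) rho s0 = occup_bump h s0 * (h * bump_rate).
Proof.
move=> hh.
have := perf_diff (delta_at s0) (occup_fix qhalfP (bump_row_le hh) rho)
  (reward_to_go_fix qstopP (trans_row_le_qstop pis_policy) (delta_at s0)).
rewrite -/visits0 value_visits0 sum_delta_at_mulr => ->.
under eq_bigr do rewrite subrr add0r sum_trans_upd_sub.
exact: sum_bump.
Qed.

Lemma occup_bump_s0 h : `|h| <= bump_radius ->
  occup_bump h s0 = occup (trans P pis) rho s0 / (1 - h * bump_rate).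
Proof.
move=> hh.
have hr : `|h| * (2 * (`|bump_rate| + 1)) <= 1.
  rewrite -ler_pdivlMr; last by have := normr_ge0 bump_rate; rewrite mulr_gt0 //; lra.
  by apply: le_trans hh _; rewrite ge_min lexx orbT.
have : `|h * bump_rate| <= 1 / 2 by rewrite normrM; have := normr_ge0 bump_rate; nra.
have := ler_norm (h * bump_rate) => h1 h2.
have hpos : 1 - h * bump_rate != 0 by rewrite gt_eqF //; lra.
apply: (mulIf hpos); rewrite divfK //.
by have := occup_bump_sub hh; lra.
Qed.

Lemma value_bump_slope h : `|h| < bump_radius ->
  value P rho (r i) (upd pis (bump s0 b0 h)) - value P rho (r i) (upd pis (bump s0 b0 0)) =
  h * (occup (trans P pis) rho s0 * qfun s0 b0 / (1 - h * bump_rate)).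
Proof.
move=> /ltW hh.
have h0 : `|0 : R| <= bump_radius by rewrite normr0 ltW // bump_radius_gt0.
have := value_bump_sub h0; have := value_bump_sub hh.
rewrite occup_bump_s0 // !mul0r mulr0 => e1 /eqP; rewrite subr_eq0 => /eqP ->.
by rewrite e1; ring.
Qed.

Lemma gradE : grad P rho r pis s0 b0 = occup (trans P pis) rho s0 * qfun s0 b0.
Proof.
have hg : (fun h => occup (trans P pis) rho s0 * qfun s0 b0 / (1 - h * bump_rate)) @ 0 -->
    occup (trans P pis) rho s0 * qfun s0 b0 / (1 - 0 * bump_rate).
  apply: cvgMl_tmp; apply: cvgV; first by rewrite mul0r subr0 oner_neq0.
  by apply: cvgB; [exact: cvg_cst | apply: cvgMr_tmp; exact: cvg_id].
have := derive1_slope bump_radius_gt0 (fun h _ => @value_bump_slope h) hg.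
by rewrite mul0r subr0 divr1.
Qed.

End Bump.

Hypothesis rho_ge0 : forall s, 0 <= rho s.
Variable M : R.
Hypothesis mismatch : forall pi pi' : @polarr R N S A, is_policy pi -> is_policy pi' ->
  forall s, visit P rho pi s <= M * visit P rho pi' s.

Lemma occup_ge0 pi s : is_policy pi -> 0 <= occup (trans P pi) rho s.
Proof.
move=> hp; apply: limr_ge; first exact/cvgP/(cvg_occup qstopP (trans_row_le_qstop hp)).
apply: nearW => n; apply: sumr_ge0 => t _.
elim: t s => [|t IH] s' //=; apply: sumr_ge0 => s _; apply: mulr_ge0 => //; exact: trans_ge0.
Qed.

(* The only use of the finite mismatch coefficient. *)
Lemma occup_eq0_transfer pi pi' s : is_policy pi -> is_policy pi' ->
  occup (trans P pi') rho s = 0 -> occup (trans P pi) rho s = 0.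
Proof.
move=> hp hp' h0; apply/eqP; rewrite eq_le occup_ge0 // andbT.
by have := mismatch hp hp' s; rewrite !visit_occup h0 mulr0.
Qed.

Definition qmean s := \sum_b pis i s b * qfun s b.

Definition greedy_on_support :=
  forall s, 0 < occup (trans P pis) rho s -> forall b, qfun s b <= qmean s.

Definition grad_dev (x : S -> A i -> R) :=
  \sum_s \sum_b grad P rho r pis s b * (x s b - pis i s b).

Lemma grad_devE (x : S -> A i -> R) :
  grad_dev x = \sum_s occup (trans P pis) rho s * \sum_b (x s b - pis i s b) * qfun s b.
Proof.
apply: eq_bigr => s _; rewrite big_distrr /=; apply: eq_bigr => b _.
by rewrite gradE; ring.
Qed.

Lemma grad_inner_upd (x : S -> A i -> R) : grad_inner P rho r pis (upd pis x) = grad_dev x.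
Proof.
rewrite /grad_inner (bigD1 i) //= upd_self [X in _ + X]big1 ?addr0 // => j hj.
by rewrite upd_other //; apply: big1 => s _; apply: big1 => b _; rewrite subrr mulr0.
Qed.

Lemma sum_policy_sub_le (x : S -> A i -> R) s : is_policy_i x ->
  (forall b, qfun s b <= qmean s) -> \sum_b (x s b - pis i s b) * qfun s b <= 0.
Proof.
move=> hx hG; under eq_bigr do rewrite mulrBl; rewrite sumrB subr_le0 -/(qmean s).
apply: (le_trans (y := \sum_b x s b * qmean s)).
  by apply: ler_sum => b _; apply: ler_wpM2l; [exact: (hx s).1 | exact: hG].
by rewrite -big_distrl /= (hx s).2 mul1r.
Qed.

Definition deviate (s1 : S) (b1 : A i) : S -> A i -> R :=
  fun s b => if s == s1 then (b == b1)%:R else pis i s b.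

Lemma deviate_policy s1 b1 : is_policy_i (deviate s1 b1).
Proof.
move=> s; rewrite /deviate; case: (eqVneq s s1) => _; last exact: pis_policy.
split=> [b|]; first by rewrite ler0n.
by rewrite (bigD1 b1) //= eqxx big1 ?addr0 // => b /negbTE ->.
Qed.

Lemma sum_deviate_sub s1 b1 (D : S -> R) :
  \sum_s D s * \sum_b (deviate s1 b1 s b - pis i s b) * qfun s b =
  D s1 * (qfun s1 b1 - qmean s1).
Proof.
rewrite (bigD1 s1) //= [X in _ + X]big1 ?addr0; last first.
  move=> s /negbTE hs.
  by rewrite big1 ?mulr0 // => b _; rewrite /deviate hs subrr mul0r.
congr (_ * _); rewrite /deviate eqxx.
under eq_bigr do rewrite mulrBl; rewrite sumrB; congr (_ - _).
by rewrite (bigD1 b1) //= eqxx mul1r big1 ?addr0 // => b /negbTE ->; rewrite mul0r.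
Qed.

Lemma greedy_of_nash : (forall x : S -> A i -> R, is_policy_i x ->
    value P rho (r i) (upd pis x) <= value P rho (r i) pis) ->
  greedy_on_support.
Proof.
move=> hN s1 hd b1.
have hp := upd_policy pis_policy (deviate_policy s1 b1).
have := hN _ (deviate_policy s1 b1).
rewrite -subr_le0 (value_upd_sub qstopP (trans_row_le_qstop hp)) sum_deviate_sub.
rewrite pmulr_rle0 ?subr_le0 // lt_neqAle occup_ge0 // andbT.
apply: contraTneq hd => /esym /(occup_eq0_transfer pis_policy hp) ->.
by rewrite ltxx.
Qed.

Lemma greedy_of_grad :
  (forall x : S -> A i -> R, is_policy_i x -> grad_dev x <= 0) -> greedy_on_support.
Proof.
move=> hg s1 hd b1.
by have := hg _ (deviate_policy s1 b1); rewrite grad_devE sum_deviate_sub pmulr_rle0 ?subr_le0.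
Qed.

Lemma weighted_dev_le0 (D : S -> R) (x : S -> A i -> R) :
  greedy_on_support -> is_policy_i x -> (forall s, 0 <= D s) ->
  (forall s, occup (trans P pis) rho s = 0 -> D s = 0) ->
  \sum_s D s * \sum_b (x s b - pis i s b) * qfun s b <= 0.
Proof.
move=> hG hx D_ge0 D_supp; apply: sumr_le0 => s _.
case: (ltrP 0 (occup (trans P pis) rho s)) => hd.
  by rewrite mulr_ge0_le0 // (sum_policy_sub_le hx (hG s hd)).
by rewrite D_supp ?mul0r //; apply/eqP; rewrite eq_le hd occup_ge0.
Qed.

Lemma nash_of_greedy : greedy_on_support -> forall x : S -> A i -> R, is_policy_i x ->
  value P rho (r i) (upd pis x) <= value P rho (r i) pis.
Proof.
move=> hG x hx; have hp := upd_policy pis_policy hx.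
rewrite -subr_le0 (value_upd_sub qstopP (trans_row_le_qstop hp)).
apply: weighted_dev_le0 => // s; first exact: occup_ge0.
exact: occup_eq0_transfer.
Qed.

Lemma grad_of_greedy : greedy_on_support ->
  forall x : S -> A i -> R, is_policy_i x -> grad_dev x <= 0.
Proof.
move=> hG x hx; rewrite grad_devE.
by apply: weighted_dev_le0 => // s; exact: occup_ge0.
Qed.

Lemma nash_player_iff : (forall x : S -> A i -> R, is_policy_i x ->
    value P rho (r i) (upd pis x) <= value P rho (r i) pis) <->
  (forall x : S -> A i -> R, is_policy_i x -> grad_dev x <= 0).
Proof.
split=> [/greedy_of_nash | /greedy_of_grad]; [exact: grad_of_greedy | exact: nash_of_greedy].
Qed.

End StoppingGame.

Theorem lemma3 (R : realType) (N S : finType) (A : N -> finType)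
  (P : S -> jact A -> S -> R) (r : N -> S -> jact A -> R) (rho : S -> R) (zeta : R) :
  0 < zeta ->
  (forall s a s', 0 <= P s a s') ->
  (forall s a, zeta <= 1 - \sum_(s' : S) P s a s') ->
  (forall i s a, -1 <= r i s a <= 1) ->
  (forall s, 0 <= rho s) -> \sum_(s : S) rho s = 1 ->
  (exists M : R, forall pi pi' : @polarr R N S A, is_policy pi -> is_policy pi' ->
     forall s, visit P rho pi s <= M * visit P rho pi' s) ->
  forall pis : @polarr R N S A, is_policy pis ->
    (is_nash P rho r pis <->
     (forall pi : @polarr R N S A, is_policy pi -> grad_inner P rho r pis pi <= 0)).
Proof.
move=> hz hP hstop _ hrho _ [M hM] pis hpis.
have player j := @nash_player_iff _ _ _ _ P rho zeta hz hP hstop r pis j hpis hrho M hM.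
split=> [hN pi hpi | hg j x hx].
- by rewrite /grad_inner; apply: sumr_le0 => j _; apply/(player j).1; [exact: hN | exact: hpi].
- apply: (player j).2 x hx => y hy.
  by rewrite -grad_inner_upd; apply/hg/upd_policy.
Qed.
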